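(* Consider the setting in the context, and let $p$ and $V(x_0,s_0,\lambda)$ be the asking reservation price and value function of $\lambda$ units of the non-traded stock. Let $\bar w=W\left(s_0e^{(\delta-\frac{\eta^2}{2})T}\eta^2T\lambda\gamma(1-\rho^2)\right)$. Then $p=D+A$, where $$D=\frac{e^{-rT}}{\gamma(1-\rho^2)}\left(\frac{\bar w}{\eta^2T}+\frac{\bar w^2}{2\eta^2T}\right),\qquad A=-\frac{e^{-rT}}{\gamma(1-\rho^2)}\ln\mathbb E\left(\exp\left(-\frac{\bar w}{\eta^2T}\left(e^{\eta\sqrt TN}-1-\eta\sqrt TN\right)\right)\right).$$ Moreover $V(x_0,s_0,\lambda)=V_D(x_0,s_0,\lambda)V_A(s_0,\lambda)$, where $$V_D(x_0,s_0,\lambda)=-\frac1\gamma\exp\left(-\gamma e^{rT}(x_0+D)-\frac{(\mu-r)^2}{2\sigma^2}T\right),\qquad V_A(s_0,\lambda)=\exp\left(-\gamma e^{rT}A\right).$$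
   Context: Fix $T>0$, $r\in\mathbb R$, $\nu,\mu\in\mathbb R$, $\eta>0$, $\sigma>0$, $\rho\in(-1,1)$, $s_0>0$, $\lambda>0$, $\gamma>0$, $x_0\in\mathbb R$; $N$ is a standard Gaussian random variable; $\delta=\nu-\eta\rho\frac{\mu-r}{\sigma}$. (Model: non-traded asset $dS_t=S_t(\nu dt+\eta dZ_t)$, traded asset $dP_t=P_t(\mu dt+\sigma dB_t)$, correlation $\rho$, bond rate $r$, exponential utility $-\frac1\gamma e^{-\gamma x}$.) The reservation price and value function are $$p=-\frac{e^{-rT}}{\gamma(1-\rho^2)}\ln\mathbb E\exp\left(-\lambda\gamma(1-\rho^2)s_0e^{(\delta-\frac{\eta^2}{2})T}e^{\eta\sqrt TN}\right),$$ $$V(x_0,s_0,\lambda)=-\frac1\gamma e^{-\gamma x_0e^{rT}-\frac{(\mu-r)^2}{2\sigma^2}T}\left(\mathbb E\exp\left(-\lambda\gamma(1-\rho^2)s_0e^{(\delta-\frac{\eta^2}{2})T}e^{\eta\sqrt TN}\right)\right)^{\frac1{1-\rho^2}}.$$ $W$ is the Lambert function, the inverse of $x\in(-1,\infty)\mapsto xe^x\in(-1/e,\infty)$. *)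

From HB Require Import structures.
From mathcomp Require Import all_boot all_order all_algebra.
From mathcomp Require Import all_classical all_reals all_analysis.
Set Implicit Arguments. Unset Strict Implicit. Unset Printing Implicit Defensive.
Import Order.TTheory GRing.Theory Num.Theory.
Local Open Scope classical_set_scope.
Local Open Scope ring_scope.

Definition gaussE {R : realType} (g : R -> R) : R :=
  fine (\int[normal_prob (0:R) 1]_x (g x)%:E)%E.

Definition lambertW {R : realType} (y : R) : R :=
  xget 0 [set x : R | -1 < x /\ x * expR x = y].

Definition delta_par {R : realType} (nu eta rho mu r sigma : R) : R :=
  nu - eta * rho * ((mu - r) / sigma).

Definition Ekey {R : realType} (T delta eta rho s0 lambda gamma : R) : R :=
  gaussE (fun n => expR (- (lambda * gamma * (1 - rho ^+ 2) * s0
          * expR ((delta - eta ^+ 2 / 2) * T) * expR (eta * Num.sqrt T * n)))).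

Definition reservation_price {R : realType}
  (T r nu mu eta sigma rho s0 lambda gamma : R) : R :=
  - (expR (- r * T) / (gamma * (1 - rho ^+ 2)))
    * ln (Ekey T (delta_par nu eta rho mu r sigma) eta rho s0 lambda gamma).

Definition value_function {R : realType}
  (T r nu mu eta sigma rho gamma : R) (x0 s0 lambda : R) : R :=
  - gamma^-1 * expR (- gamma * x0 * expR (r * T)
                     - (mu - r) ^+ 2 / (2 * sigma ^+ 2) * T)
  * powR (Ekey T (delta_par nu eta rho mu r sigma) eta rho s0 lambda gamma)
         (1 - rho ^+ 2)^-1.

(* Shifting the Gaussian variable by [b = wbar / (eta sqrt T)] (an Esscher
   change of measure) multiplies its density by [exp (-b x - b^2 / 2)].  With
   [a = eta sqrt T] and [c] the coefficient in the price, the Lambert equation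
   [wbar e^wbar = c a^2] makes the linear terms cancel, so that
   [E exp (-(wbar/a^2) (e^{aN} - 1 - aN)) = e^{wbar/a^2 + wbar^2/(2a^2)} E exp (-c e^{aN})].
   Taking logarithms splits the price as [D + A], and the value function is
   [-1/gamma exp (-gamma e^{rT} (x0 + p) - (mu-r)^2 T/(2 sigma^2))], which then
   factors as [V_D V_A]. *)

From HB Require Import structures.
From mathcomp Require Import all_boot all_order all_algebra.
From mathcomp Require Import all_classical all_reals all_analysis.
From mathcomp Require Import measurable_realfun ring lra.
Import Order.TTheory GRing.Theory Num.Theory.
Import numFieldNormedType.Exports.
Local Open Scope ring_scope.

Section integrals.
Context {R : realType}.
Local Notation leb := (@lebesgue_measure R).

Lemma Radon_Nikodym_normal_prob (m s : R) :
  ae_eq leb setT (Radon_Nikodym (charge_of_finite_measure (normal_prob m s)) leb)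
                 (EFin \o normal_pdf m s).
Proof.
have mpdf := measurable_normal_pdf m s.
apply: integral_ae_eq => //.
- by apply: Radon_Nikodym_integrable; exact: normal_prob_dominates.
- exact/measurable_EFinP.
- by move=> E _ mE; rewrite -Radon_Nikodym_integral//; exact: normal_prob_dominates.
Qed.

Lemma integral_normal_prob (m s : R) (f : R -> \bar R) :
  (normal_prob m s).-integrable setT f ->
  (\int[normal_prob m s]_x f x = \int[leb]_x (f x * (normal_pdf m s x)%:E))%E.
Proof.
move=> intf.
have numu := @normal_prob_dominates R m s.
rewrite -(Radon_Nikodym_change_of_variables numu)//.
apply: ae_eq_integral => //.
- apply: emeasurable_funM; first exact: measurable_int intf.
  by apply: (measurable_int leb); exact: Radon_Nikodym_integrable.
- apply: emeasurable_funM; first exact: measurable_int intf.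
  by apply/measurable_EFinP; exact: measurable_normal_pdf.
- exact/ae_eqe_mul2l/Radon_Nikodym_normal_prob.
Qed.

Lemma ge0_integralT_shift (G : R -> R) (b : R) :
  continuous G -> (forall x, 0 <= G x) ->
  (\int[leb]_x (G x)%:E = \int[leb]_x (G (x + b))%:E)%E.
Proof.
move=> cG G0.
have D1 : (fun x => x + b)^`()%classic = cst 1.
  by apply/funext => x; rewrite derive1E deriveD// derive_cst derive_id addr0.
rewrite (@increasing_ge0_integration_by_substitutionT _ (fun x => x + b) G)//.
- by apply: eq_integral => x _; rewrite D1 /= mulr1.
- by move=> x y; rewrite ltrD2r.
- by rewrite D1 => ?; exact: cvg_cst.
- by rewrite D1; exact: is_cvg_cst.
- by rewrite D1; exact: is_cvg_cst.
- exact: cvg_addrr_Ny.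
- exact: cvg_addrr.
Qed.

Lemma probability_integral_gt0 d (T : measurableType d)
    (P : probability T R) (f : T -> R) :
  measurable_fun setT f -> (forall x, 0 < f x) ->
  (0 < \int[P]_x (f x)%:E)%E.
Proof.
move=> mf f_gt0.
have mfE : measurable_fun setT (EFin \o f) by exact/measurable_EFinP.
have f_ge0 x : (0 <= (f x)%:E)%E by rewrite lee_fin ltW.
rewrite lt_neqAle integral_ge0// andbT; apply/eqP => /esym I0.
have : (\int[P]_x `|(f x)%:E| = 0)%E.
  by rewrite -I0; apply: eq_integral => x _; rewrite gee0_abs.
case/(ae_eq_integral_abs P measurableT mfE) => N [mN PN0 sub].
suff NT : N = setT.
  by have := probability_setT P; rewrite -NT PN0 => /eqP; rewrite eq_sym eqe oner_eq0.
apply/seteqP; split => // x _; apply: sub => /= /(_ I) /eqP.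
by rewrite eqe gt_eqF.
Qed.

Lemma probability_integrable_unit d (T : measurableType d)
    (P : probability T R) (f : T -> R) :
  measurable_fun setT f -> (forall x, 0 <= f x <= 1) ->
  P.-integrable setT (EFin \o f).
Proof.
move=> mf f01; apply: measurable_bounded_integrable => //.
  by apply: (le_lt_trans (probability_le1 P measurableT)); exact: ltry.
exists 1; split => // M M1 x _.
by case/andP: (f01 x) => f0 f1; rewrite /= ger0_norm// (le_trans f1)// ltW.
Qed.

End integrals.

Section gaussian_expectation.
Context {R : realType}.
Local Notation phi := (normal_pdf (0 : R) 1).

Lemma gaussE_EFin (h : R -> R) :
  measurable_fun setT h -> (forall x, 0 <= h x <= 1) ->
  (\int[normal_prob 0 1]_x (h x)%:E)%E = (gaussE h)%:E.
Proof.
move=> mh h01; rewrite /gaussE fineK//.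
exact/integrable_fin_num/probability_integrable_unit.
Qed.

Lemma gaussE_gt0 (h : R -> R) :
  continuous h -> (forall x, 0 < h x <= 1) -> 0 < gaussE h.
Proof.
move=> /continuous_measurable_fun mh h01.
have h01' x : 0 <= h x <= 1 by case/andP: (h01 x) => /ltW -> ->.
rewrite -lte_fin -gaussE_EFin//; apply: probability_integral_gt0 => // x.
by case/andP: (h01 x).
Qed.

Lemma gaussE_shift (g h : R -> R) (b C : R) :
  continuous g -> continuous h ->
  (forall x, 0 <= g x <= 1) -> (forall x, 0 <= h x <= 1) -> 0 <= C ->
  (forall x, g (x + b) * phi (x + b) = C * (h x * phi x)) ->
  gaussE g = C * gaussE h.
Proof.
move=> cg ch g01 h01 C0 gh.
have mg := continuous_measurable_fun cg.
have mh := continuous_measurable_fun ch.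
have cphi : continuous phi := continuous_normal_pdf (oner_neq0 R).
have mphi : measurable_fun setT phi := measurable_normal_pdf 0 1.
apply: EFin_inj; rewrite EFinM -!gaussE_EFin//.
rewrite !integral_normal_prob; try exact: probability_integrable_unit.
under eq_integral do rewrite -EFinM.
rewrite (@ge0_integralT_shift _ (fun x => g x * phi x) b); first last.
- by move=> x; rewrite mulr_ge0 ?normal_pdf_ge0//; case/andP: (g01 x).
- by move=> x; apply: continuousM; [exact: cg | exact: cphi].
under eq_integral do rewrite gh EFinM.
rewrite ge0_integralZl_EFin//.
- by move=> x _; rewrite lee_fin mulr_ge0 ?normal_pdf_ge0//; case/andP: (h01 x).
- by apply/measurable_EFinP; exact: measurable_funM.
Qed.

End gaussian_expectation.

Section lognormal_laplace.
Context {R : realType}.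

Definition laplace_lognormal (c a x : R) := expR (- (c * expR (a * x))).

Definition laplace_lognormal_tilted (k a x : R) :=
  expR (- k * (expR (a * x) - 1 - a * x)).

Lemma continuous_expR_comp (f : R -> R) :
  continuous f -> continuous (fun x => expR (f x)).
Proof. by move=> cf x; apply: continuous_comp; [exact: cf | exact: continuous_expR]. Qed.

Lemma continuous_mulrl (a : R) : continuous (fun x : R => a * x).
Proof. by move=> x; apply: (continuousM (s := cst a)); [exact: cvg_cst | exact: cvg_id]. Qed.

Lemma continuous_laplace_lognormal (c a : R) :
  continuous (laplace_lognormal c a).
Proof.
apply: continuous_expR_comp => x.
apply: (continuousN (f := fun x => c * expR (a * x))).
apply: (continuousM (s := cst c)); first exact: cvg_cst.
exact: continuous_expR_comp (continuous_mulrl a) x.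
Qed.

Lemma continuous_laplace_lognormal_tilted (k a : R) :
  continuous (laplace_lognormal_tilted k a).
Proof.
apply: continuous_expR_comp => x.
apply: (continuousM (s := cst (- k)) (t := fun x => expR (a * x) - 1 - a * x)).
  exact: cvg_cst.
apply: (continuousB (f := fun x => expR (a * x) - 1)); last exact: continuous_mulrl.
apply: (continuousB (f := fun x => expR (a * x))); last exact: cvg_cst.
exact: continuous_expR_comp (continuous_mulrl a) x.
Qed.

Lemma laplace_lognormal_unit (c a x : R) : 0 <= c ->
  0 < laplace_lognormal c a x <= 1.
Proof. by move=> c0; rewrite expR_gt0 expR_le1 oppr_le0 mulr_ge0// expR_ge0. Qed.

Lemma laplace_lognormal_tilted_unit (k a x : R) : 0 <= k ->
  0 <= laplace_lognormal_tilted k a x <= 1.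
Proof.
move=> k0; rewrite expR_ge0 expR_le1 mulNr oppr_le0 mulr_ge0//.
by have := expR_ge1Dx (a * x); lra.
Qed.

Lemma gaussE_laplace_lognormal_gt0 (c a : R) : 0 <= c ->
  0 < gaussE (laplace_lognormal c a).
Proof.
move=> c0; apply: gaussE_gt0 => [|x]; first exact: continuous_laplace_lognormal.
exact: laplace_lognormal_unit.
Qed.

Lemma gaussE_laplace_lognormal_tilted (a c w : R) :
  0 < a -> 0 <= w -> w * expR w = c * a ^+ 2 ->
  gaussE (laplace_lognormal_tilted (w / a ^+ 2) a) =
  expR (w / a ^+ 2 + w ^+ 2 / (2 * a ^+ 2)) * gaussE (laplace_lognormal c a).
Proof.
move=> a0 w0 hw.
have a2 : a ^+ 2 != 0 by rewrite expf_neq0 ?gt_eqF.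
have cE : c = w * expR w / a ^+ 2 by rewrite hw mulfK.
have c0 : 0 <= c.
  by rewrite cE; apply: divr_ge0; [exact: mulr_ge0 w0 (expR_ge0 _) | exact: sqr_ge0].
apply: (@gaussE_shift _ _ _ (w / a)).
- exact: continuous_laplace_lognormal_tilted.
- exact: continuous_laplace_lognormal.
- by move=> x; apply: laplace_lognormal_tilted_unit; exact: divr_ge0 w0 (sqr_ge0 a).
- by move=> x; case/andP: (laplace_lognormal_unit c a x c0) => /ltW -> ->.
- exact: expR_ge0.
(* The Lambert equation turns [c e^{a(x+b)}] into [(w/a^2) e^{ax}], and the
   cross term [-bx] of the shifted density cancels [(w/a^2) ax]. *)
move=> x; rewrite normal_pdfE ?oner_neq0//= /normal_fun.
rewrite /laplace_lognormal_tilted /laplace_lognormal.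
rewrite [LHS]mulrCA -expRD [RHS]mulrA -expRD [RHS]mulrCA -expRD.
congr (_ * expR _).
have -> : a * (x + w / a) = a * x + w by field; rewrite gt_eqF.
rewrite expRD cE.
by field; rewrite gt_eqF.
Qed.

End lognormal_laplace.

Section lambertW.
Context {R : realType}.

Lemma lambertWK (y : R) : 0 <= y -> lambertW y * expR (lambertW y) = y.
Proof.
move=> y0.
have cf : continuous (fun x : R => x * expR x).
  by move=> x; apply: continuousM; [exact: cvg_id | exact: continuous_expR].
have [|x] := @IVT R (fun x => x * expR x) 0 y y y0 (continuous_subspaceT cf).
  rewrite mul0r ge_min le_max y0 /=.
  by rewrite ler_peMr ?orbT// (le_trans _ (expR_ge1Dx y))// lerDl.
rewrite in_itv /= => /andP[x0 _] hx.
have : exists x : R, -1 < x /\ x * expR x = y.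
  by exists x; split => //; apply: lt_le_trans x0; rewrite ltrN10.
by move=> /(xgetPex 0) [].
Qed.

Lemma lambertW_gt0 (y : R) : 0 < y -> 0 < lambertW y.
Proof.
move=> y0; have WE := lambertWK y (ltW y0).
rewrite ltNge; apply/negP => W0.
by move: y0; rewrite -WE ltNge mulr_le0_ge0// expR_ge0.
Qed.

End lambertW.

Lemma value_functionE {R : realType} (T r nu mu eta sigma rho gamma x0 s0 lambda : R) :
  gamma != 0 -> 1 - rho ^+ 2 != 0 ->
  0 < Ekey T (delta_par nu eta rho mu r sigma) eta rho s0 lambda gamma ->
  value_function T r nu mu eta sigma rho gamma x0 s0 lambda =
  - gamma^-1 * expR (- gamma * expR (r * T)
                       * (x0 + reservation_price T r nu mu eta sigma rho s0 lambda gamma)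
                     - (mu - r) ^+ 2 / (2 * sigma ^+ 2) * T).
Proof.
move=> g0 rho0 K0.
rewrite /value_function /reservation_price /powR gt_eqF// -mulrA -expRD.
congr (_ * expR _); rewrite [- r * T]mulNr expRN.
(* generalized so that [field] does not ask for [sigma != 0] *)
move: ((mu - r) ^+ 2 / (2 * sigma ^+ 2) * T) => m.
by field; rewrite g0 rho0 gt_eqF ?expR_gt0.
Qed.

Theorem theorem3 (R : realType) (T r nu mu eta sigma rho s0 lambda gamma x0 : R)
  (hT : 0 < T) (heta : 0 < eta) (hsigma : 0 < sigma)
  (hrho1 : -1 < rho) (hrho2 : rho < 1)
  (hs0 : 0 < s0) (hlambda : 0 < lambda) (hgamma : 0 < gamma) :
  let delta := delta_par nu eta rho mu r sigma in
  let wbar := lambertW (s0 * expR ((delta - eta ^+ 2 / 2) * T) * eta ^+ 2 * T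
                        * lambda * gamma * (1 - rho ^+ 2)) in
  let D := expR (- r * T) / (gamma * (1 - rho ^+ 2))
           * (wbar / (eta ^+ 2 * T) + wbar ^+ 2 / (2 * eta ^+ 2 * T)) in
  let A := - (expR (- r * T) / (gamma * (1 - rho ^+ 2)))
           * ln (gaussE (fun n => expR (- (wbar / (eta ^+ 2 * T))
                   * (expR (eta * Num.sqrt T * n) - 1 - eta * Num.sqrt T * n)))) in
  let VD := - gamma^-1 * expR (- gamma * expR (r * T) * (x0 + D)
                               - (mu - r) ^+ 2 / (2 * sigma ^+ 2) * T) in
  let VA := expR (- gamma * expR (r * T) * A) in
  reservation_price T r nu mu eta sigma rho s0 lambda gamma = D + A /\
  value_function T r nu mu eta sigma rho gamma x0 s0 lambda = VD * VA.
Proof.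
move=> delta wbar D A VD VA.
have rho2 : 0 < 1 - rho ^+ 2 by nra.
have a0 : 0 < eta * Num.sqrt T by rewrite mulr_gt0// sqrtr_gt0.
have a2 : eta ^+ 2 * T = (eta * Num.sqrt T) ^+ 2 by rewrite exprMn sqr_sqrtr// ltW.
pose c := lambda * gamma * (1 - rho ^+ 2) * s0 * expR ((delta - eta ^+ 2 / 2) * T).
have c0 : 0 < c by rewrite !mulr_gt0// expR_gt0.
have EK : Ekey T delta eta rho s0 lambda gamma
          = gaussE (laplace_lognormal c (eta * Num.sqrt T)) by [].
have K0 : 0 < Ekey T delta eta rho s0 lambda gamma.
  by rewrite EK gaussE_laplace_lognormal_gt0// ltW.
have arg0 : 0 < s0 * expR ((delta - eta ^+ 2 / 2) * T) * eta ^+ 2 * T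
                * lambda * gamma * (1 - rho ^+ 2).
  by rewrite !mulr_gt0// ?expR_gt0// exprn_gt0.
have w0 : 0 <= wbar by exact/ltW/lambertW_gt0.
have hw : wbar * expR wbar = c * (eta * Num.sqrt T) ^+ 2.
  by rewrite lambertWK ?ltW// -a2 /c; ring.
have hp : reservation_price T r nu mu eta sigma rho s0 lambda gamma = D + A.
  rewrite /reservation_price -/delta EK /A /D a2.
  rewrite (gaussE_laplace_lognormal_tilted _ _ _ a0 w0 hw).
  rewrite lnM ?posrE ?expR_gt0// expRK -a2 mulrA.
  ring.
split=> //.
rewrite value_functionE ?gt_eqF// hp /VD /VA -[RHS]mulrA -expRD.
congr (_ * expR _); ring.
Qed.
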